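(* Let $n\geqslant 2$, $\varepsilon \in [0,1]$, $p \geqslant 2$ an integer, and $\bm x \in \mathcal Y(\varepsilon,p)$. Define $\mu = 1/n$ and the coefficient of variation $\mathrm{CV}(\bm x) = \sqrt{\frac1n \sum_{i=1}^n (x_i-\mu)^2}\,/\,\mu$. Then $$(\mathrm{CV}(\bm x))^2 \leqslant B_p(\varepsilon) := \frac{(D_p+1)^2}{(1+\varepsilon D_p)^2} - 1.$$ Moreover, $B_p(\varepsilon)$ is strictly decreasing in $\varepsilon$ on $[0,1]$, with $B_p(0) = (D_p+1)^2 - 1$ and $B_p(1) = 0$.
   Context: For $\bm x \in \mathbb{R}^n_{\geqslant 0}$ and $p\geqslant 1$, $\|\bm x\|_p = (\sum_{i=1}^n x_i^p)^{1/p}$. Define $D_p = n^{1-1/p}-1$. Let $\Delta_n = \{\bm x \in \mathbb{R}^n_{\geqslant 0} : \sum_{i=1}^n x_i = 1\}$ be the probability simplex, and for $\varepsilon\in[0,1]$ and integer $p\geqslant 2$ let $\mathcal Y(\varepsilon,p) = \{\bm x \in \Delta_n : (1+\varepsilon D_p)\|\bm x\|_p \leqslant 1\}$. *)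

From mathcomp Require Import all_boot all_order all_algebra.
From mathcomp Require Import reals exp.
Set Implicit Arguments. Unset Strict Implicit. Unset Printing Implicit Defensive.
Import Order.TTheory GRing.Theory Num.Theory.
Local Open Scope ring_scope.

Definition pnorm (R : realType) (n p : nat) (x : 'I_n -> R) : R :=
  (\sum_(i < n) x i ^+ p) `^ (p%:R^-1).

Definition Dp (R : realType) (n p : nat) : R :=
  (n%:R) `^ (1 - p%:R^-1) - 1.

Definition in_simplex (R : realType) (n : nat) (x : 'I_n -> R) : Prop :=
  (forall i, 0 <= x i) /\ \sum_(i < n) x i = 1.

Definition in_Y (R : realType) (n : nat) (eps : R) (p : nat) (x : 'I_n -> R) : Prop :=
  in_simplex x /\ (1 + eps * Dp R n p) * pnorm p x <= 1.

Definition CV (R : realType) (n : nat) (x : 'I_n -> R) : R :=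
  let mu := (n%:R)^-1 in
  Num.sqrt ((n%:R)^-1 * \sum_(i < n) (x i - mu) ^+ 2) / mu.

Definition Bp (R : realType) (n p : nat) (eps : R) : R :=
  (Dp R n p + 1) ^+ 2 / (1 + eps * Dp R n p) ^+ 2 - 1.

From mathcomp Require Import all_boot all_order all_algebra.
From mathcomp Require Import reals exp.
From mathcomp Require Import ring lra.
Import Order.TTheory GRing.Theory Num.Theory.
Local Open Scope ring_scope.

(* On the simplex, CV(x)^2 = n ||x||_2^2 - 1.  Summing the weighted AM-GM
   inequality p t^2 <= 2 t^p + (p - 2) over t = x_i / M, with M the power mean
   of order p of x, gives the power-mean inequality
   n ||x||_2^2 <= (n^(1 - 1/p) ||x||_p)^2 = ((D_p + 1) ||x||_p)^2, and on
   Y(eps, p) we have ||x||_p <= 1 / (1 + eps D_p).  Since D_p > 0, B_p is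
   strictly decreasing. *)

Section CoefficientOfVariation.
Set Implicit Arguments.
Unset Strict Implicit.
Variable R : realType.

Lemma subr1_mul_expr_subr1_ge0 (t : R) (m : nat) :
  0 <= t -> 0 <= (t - 1) * (t ^+ m - 1).
Proof.
move=> t0; have [t1|t1] := lerP t 1.
  by rewrite mulr_le0 // subr_le0 // exprn_ile1.
by rewrite mulr_ge0 // subr_ge0 ?exprn_ege1 // ltW.
Qed.

Lemma AMGM_sqr_expr (t : R) (k : nat) :
  0 <= t -> k.+2%:R * t ^+ 2 <= 2 * t ^+ k.+2 + k%:R.
Proof.
move=> t0; elim: k => [|k IH]; first by rewrite mulr2n mulrDl mul1r; lra.
(* [(t - 1) (2 t^(k+2) - t - 1) = t (t - 1) (t^(k+1) - 1) + (t - 1) (t^(k+2) - 1)] *)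
have step : t ^+ 2 - 1 <= 2 * t ^+ k.+2 * (t - 1).
  have := @subr1_mul_expr_subr1_ge0 t k.+1 t0.
  have := @subr1_mul_expr_subr1_ge0 t k.+2 t0.
  rewrite (exprS t k.+1); nra.
rewrite (exprS t k.+2) -!natr1 in IH *; nra.
Qed.

Lemma pnorm_ge0 (n p : nat) (x : 'I_n -> R) : 0 <= pnorm p x.
Proof. exact: powR_ge0. Qed.

Lemma pnorm_expr (n p : nat) (x : 'I_n -> R) : (0 < p)%N ->
  (forall i, 0 <= x i) -> pnorm p x ^+ p = \sum_(i < n) x i ^+ p.
Proof.
move=> p0 x0; rewrite /pnorm -powR_mulrn ?powR_ge0 // -powRrM mulVf.
  by rewrite powRr1 // sumr_ge0 // => i _; rewrite exprn_ge0.
by rewrite pnatr_eq0 -lt0n.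
Qed.

Lemma sum_sqr_le_mean (n k : nat) (x : 'I_n -> R) (M : R) : 0 < M ->
  (forall i, 0 <= x i) -> \sum_(i < n) x i ^+ k.+2 = n%:R * M ^+ k.+2 ->
  \sum_(i < n) x i ^+ 2 <= n%:R * M ^+ 2.
Proof.
move=> M0 x0 xM; set p := k.+2.
have sum_AMGM : \sum_(i < n) p%:R * (x i / M) ^+ 2 <=
                \sum_(i < n) (2 * (x i / M) ^+ p + k%:R).
  by apply: ler_sum => i _; rewrite AMGM_sqr_expr // divr_ge0 // ltW.
rewrite -mulr_sumr big_split /= -mulr_sumr sumr_const card_ord in sum_AMGM.
rewrite !(eq_bigr _ (fun i _ => expr_div_n (x i) M _)) -!mulr_suml xM in sum_AMGM.
rewrite (_ : 2 * (n%:R * M ^+ p / M ^+ p) + k%:R *+ n = p%:R * n%:R) in sum_AMGM.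
  by rewrite ler_pM2l ?ltr0n // ler_pdivrMr ?exprn_gt0 // mulrC in sum_AMGM.
by rewrite mulfK ?expf_neq0 ?gt_eqF // -mulr_natr /p; ring.
Qed.

Lemma sum_sqr_le_pnorm (n p : nat) (x : 'I_n -> R) : (2 <= p)%N ->
  (forall i, 0 <= x i) ->
  n%:R * \sum_(i < n) x i ^+ 2 <= (n%:R `^ (1 - p%:R^-1) * pnorm p x) ^+ 2.
Proof.
case: p => [|[|k]] // _; set p := k.+2.
case: n x => [x _|m x x0]; first by rewrite mul0r sqr_ge0.
set n := m.+1.
set S := \sum_(i < n) x i ^+ p.
have S0 : 0 <= S by rewrite sumr_ge0 // => i _; rewrite exprn_ge0.
have [S_eq0|S_neq0] := eqVneq S 0.
  have xp0 := psumr_eq0P (fun i _ => exprn_ge0 p (x0 i)) S_eq0.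
  rewrite big1 ?mulr0 ?sqr_ge0 // => i _.
  by have /eqP := xp0 i isT; rewrite expf_eq0 => /andP[_ /eqP ->]; rewrite expr0n.
have S_gt0 : 0 < S by rewrite lt0r S_neq0.
have n0 : 0 < n%:R :> R by rewrite ltr0n.
set c := n%:R `^ (1 - p%:R^-1) : R.
have cp : c ^+ p = n%:R ^+ k.+1.
  rewrite /c -powR_mulrn ?powR_ge0 // -powRrM mulrBl mul1r mulVf ?pnatr_eq0 //.
  by rewrite /p -addn1 natrD addrK powR_mulrn // ltW.
set M := c * pnorm p x / n%:R.
have M0 : 0 < M by rewrite /M divr_gt0 // mulr_gt0 ?powR_gt0.
have SM : S = n%:R * M ^+ p.
  rewrite /M expr_div_n exprMn cp pnorm_expr // (exprS _ k.+1) -/S.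
  by field; rewrite expf_neq0 ?gt_eqF.
have -> : (c * pnorm p x) ^+ 2 = n%:R * (n%:R * M ^+ 2).
  by rewrite /M; field; rewrite gt_eqF.
by rewrite ler_pM2l // (sum_sqr_le_mean M0 x0 SM).
Qed.

Lemma CV_sqr_simplex (n : nat) (x : 'I_n -> R) : \sum_(i < n) x i = 1 ->
  CV x ^+ 2 = n%:R * \sum_(i < n) x i ^+ 2 - 1.
Proof.
case: n x => [x|m x sx]; first by rewrite big_ord0 => /eqP; rewrite eq_sym oner_eq0.
set n := m.+1; have n0 : n%:R != 0 :> R by rewrite pnatr_eq0.
have var : \sum_(i < n) (x i - n%:R^-1) ^+ 2 = \sum_(i < n) x i ^+ 2 - n%:R^-1.
  under eq_bigr => i _ do rewrite sqrrB -mulr_natr.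
  rewrite big_split /= sumrB -!mulr_suml sx sumr_const card_ord -mulr_natl.
  by field.
rewrite /CV var expr_div_n sqr_sqrtr; first by field.
by rewrite -var mulr_ge0 ?invr_ge0 ?ler0n ?sumr_ge0 // => i _; rewrite sqr_ge0.
Qed.

Lemma Dp_gt0 (n p : nat) : (1 < n)%N -> (1 < p)%N -> 0 < Dp R n p.
Proof.
move=> n1 p1; have r0 : 0 < 1 - p%:R^-1 :> R.
  by rewrite subr_gt0 invf_lt1 ?ltr1n ?ltr0n // ltnW.
have := gt0_ltr_powR r0 _ _ (_ : 1 < n%:R); rewrite powR1 subr_gt0; apply.
- by rewrite nnegrE.
- by rewrite nnegrE ler0n.
- by rewrite ltr1n.
Qed.

Lemma Bp0 (n p : nat) : Bp n p (0 : R) = (Dp R n p + 1) ^+ 2 - 1.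
Proof. by rewrite /Bp mul0r addr0 expr1n divr1. Qed.

Lemma Bp1 (n p : nat) : 0 <= Dp R n p -> Bp n p (1 : R) = 0.
Proof.
by move=> D0; rewrite /Bp mul1r (addrC 1) divff ?subrr // expf_neq0 // gt_eqF // ltr_wpDl.
Qed.

Lemma Bp_decreasing (n p : nat) (e1 e2 : R) : 0 < Dp R n p ->
  0 <= e1 -> e1 < e2 -> Bp n p e2 < Bp n p e1.
Proof.
move=> D0 e10 e12; rewrite /Bp ltrD2r ltr_pM2l ?exprn_gt0 ?ltr_wpDl ?ltW //.
have q1 : 0 < 1 + e1 * Dp R n p by rewrite ltr_pwDl // mulr_ge0 // ltW.
have q12 : 1 + e1 * Dp R n p < 1 + e2 * Dp R n p by rewrite ltrD2l ltr_pM2r.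
have q2 := lt_trans q1 q12.
by rewrite ltf_pV2 ?posrE ?exprn_gt0 // ltrXn2r // ltW.
Qed.

Lemma CV_sqr_le_Bp (n p : nat) (eps : R) (x : 'I_n -> R) : (2 <= p)%N ->
  0 < 1 + eps * Dp R n p -> in_Y eps p x -> CV x ^+ 2 <= Bp n p eps.
Proof.
move=> p2 q0 [[x0 sx] qP].
rewrite CV_sqr_simplex // /Bp lerD2r subrK ler_pdivlMr ?exprn_gt0 //.
apply: le_trans (ler_wpM2r (sqr_ge0 _) (sum_sqr_le_pnorm p2 x0)) _.
rewrite -exprMn -mulrA exprMn; apply: ler_piMr; first exact: sqr_ge0.
by rewrite exprn_ile1 ?mulr_ge0 ?pnorm_ge0 ?(ltW q0) // mulrC.
Qed.

End CoefficientOfVariation.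

Theorem proposition2 (R : realType) (n p : nat) (eps : R) (x : 'I_n -> R) :
  (2 <= n)%N -> 0 <= eps <= 1 -> (2 <= p)%N -> in_Y eps p x ->
  CV x ^+ 2 <= Bp n p eps /\
  (forall e1 e2 : R, 0 <= e1 -> e1 < e2 -> e2 <= 1 -> Bp n p e2 < Bp n p e1) /\
  Bp n p (0 : R) = (Dp R n p + 1) ^+ 2 - 1 /\
  Bp n p (1 : R) = 0.
Proof.
move=> n2 /andP[eps0 _] p2 xY.
have D0 : 0 < Dp R n p by apply: Dp_gt0.
have q0 : 0 < 1 + eps * Dp R n p by rewrite ltr_pwDl // mulr_ge0 // ltW.
split; first exact: CV_sqr_le_Bp.
split; first by move=> e1 e2 e10 e12 _; apply: Bp_decreasing.
by rewrite Bp0 Bp1 ?ltW.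
Qed.
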